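(* Let $\mathcal{U}$ and $\mathcal{C}$ be finite-dimensional vector spaces over a common finite field, let $\Theta:\mathcal{U}\to\mathcal{S}_=(\mathcal{H}_{Y_{[1:L]}})$, $u\mapsto\rho^u_{Y_{[1:L]}}$, be a classical-quantum channel, and let $\mathbb{A}\subseteq2^{[1:L]}$. Let $U\sim\tilde P_U$ with $\mathbb{V}(\tilde P_U,P^U_U)\le\epsilon'$, where $P^U_U$ is uniform on $\mathcal{U}$. Suppose there is a source code for $U$ with compound quantum side information $(\rho^U_{Y_{\mathcal{A}}})_{\mathcal{A}\in\mathbb{A}}$ consisting of a linear encoder $g:\mathcal{U}\to\mathcal{C}$ and decoders $h_{\mathcal{A}}$ ($\mathcal{A}\in\mathbb{A}$), each of which given $c\in\mathcal{C}$ performs a measurement on $\mathcal{H}_{Y_{\mathcal{A}}}$ with outcomes in $\mathcal{U}$, such that $\max_{\mathcal{A}\in\mathbb{A}}\Pr_{U\sim\tilde P_U}[h_{\mathcal{A}}(\rho^U_{Y_{\mathcal{A}}},g(U))\ne U]\le\epsilon''$. Then, for a secret set $\mathcal{S}$ with $|\mathcal{S}|=|\mathcal{U}|/|\mathcal{C}|$ and $S$ uniform on $\mathcal{S}$, there exist encoders $\mathsf{Enc}_c:\mathcal{S}\to\mathcal{U}$ and decoding measurements $\mathsf{Dec}_{c,\mathcal{A}}$ on $\mathcal{H}_{Y_{\mathcal{A}}}$ with outcomes in $\mathcal{S}$, for $c\in\mathcal{C}$, $\mathcal{A}\in\mathbb{A}$, such that $$\max_{\mathcal{A}\in\mathbb{A}}\sum_{c\in\mathcal{C}}\frac1{|\mathcal{C}|}\bar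 P^{c,\mathcal{A}}_e\le\epsilon'+\epsilon'',\qquad \bar P^{c,\mathcal{A}}_e=\mathbb{E}_S\Big[\Pr\big[\mathsf{Dec}_{c,\mathcal{A}}(\rho^{\mathsf{Enc}_c(S)}_{Y_{\mathcal{A}}})\ne S\big]\Big].$$
   Context: $\mathcal{H}_{Y_{[1:L]}}=\mathcal{H}_{Y_1}\otimes\cdots\otimes\mathcal{H}_{Y_L}$ (finite-dimensional), $\mathcal{S}_=(\mathcal{H})$ is the set of density operators, and $\rho^u_{Y_{\mathcal{A}}}$ is the reduced state on $Y_l$, $l\in\mathcal{A}$. The variational distance is $\mathbb{V}(p,q)=\sum_x|p(x)-q(x)|$. *)

From HB Require Import structures.
From mathcomp Require Import all_boot all_order all_algebra all_field.
Set Implicit Arguments. Unset Strict Implicit. Unset Printing Implicit Defensive.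
Import Order.TTheory GRing.Theory Num.Theory.
Local Open Scope ring_scope.

(* Complex scalars: an arbitrary numClosedFieldType C (e.g. the complex numbers).
   Hilbert spaces are given by their finite orthonormal bases (finTypes);
   operators on C^T are represented by their matrix entries T -> T -> C. *)
Definition op (C : Type) (T : finType) := T -> T -> C.

Section Quantum.
Variable C : numClosedFieldType.

Definition psd (T : finType) (M : op C T) : Prop :=
  forall v : T -> C, 0 <= \sum_i \sum_j (v i)^* * M i j * v j.

Definition density (T : finType) (rho : op C T) : Prop :=
  psd rho /\ \sum_i rho i i = 1.

Definition trmul (T : finType) (M N : op C T) : C :=
  \sum_i \sum_j M i j * N j i.

Definition povm (T O : finType) (M : O -> op C T) : Prop :=
  (forall o, psd (M o)) /\ (forall i j, \sum_o M o i j = (i == j)%:R).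

Definition is_distr (T : finType) (p : T -> C) : Prop :=
  (forall x, 0 <= p x) /\ \sum_x p x = 1.

Definition uniform (T : finType) : T -> C := fun _ => (#|T|%:R)^-1.

Definition vdist (T : finType) (p q : T -> C) : C := \sum_x `|p x - q x|.
End Quantum.

(* Composite system H_{Y_1} (x) ... (x) H_{Y_L}, dim H_{Y_l} = d l. *)
Definition full_basis (L : nat) (d : 'I_L -> nat) : finType :=
  {dffun forall l : 'I_L, 'I_(d l)}.

(* basis of H_{Y_A} = (x)_{l in A} H_{Y_l} *)
Definition sub_basis (L : nat) (d : 'I_L -> nat) (A : {set 'I_L}) : finType :=
  {dffun forall l : {x : 'I_L | x \in A}, 'I_(d (val l))}.

Definition restr (L : nat) (d : 'I_L -> nat) (A : {set 'I_L})
  (x : full_basis d) : sub_basis d A :=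
  finfun (fun l : {x : 'I_L | x \in A} => x (val l)).

Definition ptrace {C : numClosedFieldType} {L : nat} {d : 'I_L -> nat}
  (A : {set 'I_L}) (rho : op C (full_basis d)) : op C (sub_basis d A) :=
  fun a b => \sum_(x : full_basis d) \sum_(y : full_basis d |
      [&& restr A x == a, restr A y == b & [forall l, (l \notin A) ==> (x l == y l)]])
      rho x y.
Arguments ptrace {C L d} A rho _ _.
Arguments restr {L d} A x.

From HB Require Import structures.
From mathcomp Require Import all_boot all_order all_algebra all_field.
From mathcomp Require Import zify ring.
Set Implicit Arguments. Unset Strict Implicit. Unset Printing Implicit Defensive.
Import Order.TTheory GRing.Theory Num.Theory.
Local Open Scope ring_scope.

(* Choose the encoder so that [(c, s) |-> Enc c s] is a bijection onto the
   messages and [g (Enc c s)] depends on [c] only; this is possible because the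
   fibres of the linear map [g] are cosets of its kernel, all of the same size.
   Knowing [c], the decoder runs [h_A] on the syndrome of [c] and outputs the
   secret of the recovered message, so it errs at most when [h_A] does.
   A uniform pair [(c, s)] is a uniform message, and since error probabilities
   lie in [0, 1] (measurements and reduced states are positive semidefinite,
   states have unit trace), replacing the uniform law by [P~_U] costs at most
   [eps1] in mean error, leaving [eps1 + eps2]. *)


Section PositiveSemidefinite.
Variables (C : numClosedFieldType) (T : finType).
Implicit Types (M N : op C T) (v w : T -> C).

Definition qform N v w : C := \sum_i \sum_j (v i)^* * N i j * w j.

Definition deltav (p : T) (t : C) : T -> C := fun x => (x == p)%:R * t.

Lemma sum_delta (f : T -> C) i : \sum_j (j == i)%:R * f j = f i.
Proof. by rewrite (bigD1 i) //= eqxx mul1r big1 ?addr0 // => j /negPf ->; rewrite mul0r. Qed.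

Lemma qformDD N v w :
  qform N (v \+ w) (v \+ w) = qform N v v + qform N v w + qform N w v + qform N w w.
Proof.
rewrite /qform -!big_split; apply: eq_bigr => i _ /=.
rewrite -!big_split; apply: eq_bigr => j _ /=; rewrite rmorphD /=; ring.
Qed.

Lemma qform_deltavr N v p t : qform N v (deltav p t) = (\sum_i (v i)^* * N i p) * t.
Proof.
rewrite /qform mulr_suml; apply: eq_bigr => i _.
rewrite -(sum_delta (fun j => (v i)^* * N i j * t)); apply: eq_bigr => j _.
by rewrite /deltav; ring.
Qed.

Lemma qform_deltavl N v p t : qform N (deltav p t) v = t^* * \sum_j N p j * v j.
Proof.
rewrite /qform -(sum_delta (fun i => t^* * \sum_j N i j * v j)); apply: eq_bigr => i _.
rewrite /deltav rmorphM /= rmorph_nat !mulr_sumr; apply: eq_bigr => j _; ring.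
Qed.

Lemma qform_deltav N i j a b : qform N (deltav i a) (deltav j b) = a^* * N i j * b.
Proof.
rewrite qform_deltavl -mulrA -(sum_delta (fun x => N i x * b)).
by congr (_ * _); apply: eq_bigr => x _; rewrite /deltav; ring.
Qed.

Lemma qform_deltavD N i j a b :
  qform N (deltav i a \+ deltav j b) (deltav i a \+ deltav j b) =
  a^* * N i i * a + a^* * N i j * b + b^* * N j i * a + b^* * N j j * b.
Proof. by rewrite qformDD !qform_deltav. Qed.

Lemma psd_diag_ge0 {N} : psd N -> forall i, 0 <= N i i.
Proof.
move=> psdN i; have := psdN (deltav i 1 \+ deltav i 0).
by rewrite -/(qform _ _ _) qform_deltavD rmorph0 rmorph1 !(mulr0, mul0r, mul1r, mulr1, addr0).
Qed.

(* Polarization with the test vectors [e_i + e_j] and [e_i + 'i e_j]. *)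
Lemma psd_adj {N} : psd N -> forall i j, N j i = (N i j)^*.
Proof.
move=> psdN i j.
have real_test t : N i i + N i j * t + t^* * N j i + t^* * N j j * t \is Num.real.
  apply: ger0_real; have := psdN (deltav i 1 \+ deltav j t).
  by rewrite -/(qform _ _ _) qform_deltavD rmorph1 !(mul1r, mulr1).
have conj_test t : t^* * (N i j)^* + t * (N j i)^* = N i j * t + t^* * N j i.
  have /CrealP := real_test t.
  rewrite !rmorphD !rmorphM /= conjCK.
  rewrite (CrealP (ger0_real (psd_diag_ge0 psdN i))).
  rewrite (CrealP (ger0_real (psd_diag_ge0 psdN j))) => /eqP; rewrite -subr_eq0 => /eqP E.
  by apply/eqP; rewrite -subr_eq0 -E; apply/eqP; ring.
have E1 := conj_test 1; have Ei := conj_test 'i.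
rewrite conjCi !rmorph1 !(mul1r, mulr1) in E1 Ei.
have two : (2 : C) != 0 by rewrite pnatr_eq0.
rewrite -[N j i]conjCK; congr _^*; apply: (mulfI two); apply: (mulfI (neq0Ci C)).
have -> : 'i * (2 * (N j i)^*) =
    'i * ((N i j)^* + (N j i)^*) + (- 'i * (N i j)^* + 'i * (N j i)^*) by ring.
rewrite E1 Ei; ring.
Qed.

(* The test vector [a e_p + e_j] has form value [-(N_jj + 2)]. *)
Lemma psd_row0 {N p} : psd N -> N p p = 0 -> forall j, N p j = 0.
Proof.
move=> psdN Npp0 j; apply/eqP; apply: contraT => x_neq0.
set x := N p j in x_neq0 *; set r := N j j.
have r_ge0 : 0 <= r := psd_diag_ge0 psdN j.
have xc_neq0 : x^* != 0 by rewrite conjC_eq0.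
pose a := - (r + 1) / x^*.
have conj_a : a^* = - (r + 1) / x.
  by rewrite fmorph_div rmorphN rmorphD rmorph1 /= conjCK (geC0_conj r_ge0).
have := psdN (deltav p a \+ deltav j 1).
rewrite -/(qform _ _ _) qform_deltavD Npp0 (psd_adj psdN p j) -/x -/r conj_a rmorph1.
have -> : - (r + 1) / x * 0 * a + - (r + 1) / x * x * 1 + 1 * x^* * a + 1 * r * 1 = - (r + 2).
  by rewrite /a; field; apply/andP.
have r2_gt0 : 0 < r + 2 by rewrite ltr_wpDl // ltr0n.
by rewrite oppr_ge0 => /(lt_le_trans r2_gt0); rewrite ltxx.
Qed.

Definition schur N p : op C T := fun i j => N i j - N i p * N p j / N p p.

Lemma schur_pivot N p : schur N p p p = 0.
Proof.
rewrite /schur; have [->|Npp_neq0] := eqVneq (N p p) 0; first by rewrite !mul0r subrr.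
by rewrite mulfK ?subrr.
Qed.

Lemma psd_schur {N} p : psd N -> psd (schur N p).
Proof.
move=> psdN v; set a := N p p.
have [a0|a_neq0] := eqVneq a 0.
  by have := psdN v; congr (0 <= _); apply: eq_bigr => i _; apply: eq_bigr => j _;
    rewrite /schur -/a a0 invr0 mulr0 subr0.
set y := \sum_j N p j * v j.
have conj_y : y^* = \sum_i (v i)^* * N i p.
  rewrite rmorph_sum; apply: eq_bigr => i _.
  by rewrite rmorphM /= -(psd_adj psdN p i) mulrC.
have conj_a : a^* = a by rewrite geC0_conj // psd_diag_ge0.
have schur_form : qform (schur N p) v v = qform N v v - y^* * y / a.
  rewrite /qform conj_y mulr_suml mulr_suml -sumrB; apply: eq_bigr => i _.
  rewrite /y mulr_sumr mulr_suml -sumrB; apply: eq_bigr => j _.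
  by rewrite /schur -/a; ring.
(* The Schur complement form is the form of [N] at [v] shifted along [e_p]. *)
have shifted_form : qform N (v \+ deltav p (- y / a)) (v \+ deltav p (- y / a))
    = qform N v v - y^* * y / a.
  rewrite qformDD qform_deltavr qform_deltavl qform_deltav -/y -conj_y -/a.
  by rewrite rmorphM /= rmorphN /= fmorphV /= conj_a; field.
by rewrite -/(qform _ _ _) schur_form -shifted_form; apply: psdN.
Qed.

Lemma trmul_schur M {N} p : psd N ->
  trmul M N = trmul M (schur N p) + qform M (N^~ p) (N^~ p) / N p p.
Proof.
move=> psdN; rewrite /trmul /qform mulr_suml -big_split; apply: eq_bigr => i _ /=.
rewrite mulr_suml -big_split; apply: eq_bigr => j _ /=.
by rewrite -(psd_adj psdN i p) /schur; ring.
Qed.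

Definition diag_support N := [set i | N i i != 0].

Lemma diag_support_schur {N} p : psd N -> diag_support (schur N p) \subset diag_support N :\ p.
Proof.
move=> psdN; apply/subsetP => i; rewrite !inE.
have [->|_] := eqVneq i p; first by rewrite schur_pivot eqxx.
apply: contraNN => /eqP Nii0.
by rewrite /schur Nii0 (psd_row0 psdN Nii0 p) !mul0r subrr.
Qed.

Lemma psd_diag_support0 {N} : psd N -> diag_support N = set0 -> forall i j, N i j = 0.
Proof.
move=> psdN supp0 i; apply: psd_row0 psdN _; apply/eqP.
have : i \notin diag_support N by rewrite supp0 inE.
by rewrite inE negbK.
Qed.

(* Peel off one rank-one term [N e_p e_p^* N / N_pp] at a time: each has trace
   against [M] equal to a value of the quadratic form of [M]. *)
Lemma trmul_psd_ge0 M N : psd M -> psd N -> 0 <= trmul M N.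
Proof.
move=> psdM; have [n supp_lt] := ubnP #|diag_support N|.
elim: n N supp_lt => // n IHn N supp_lt psdN.
have [supp0|[p p_supp]] := set_0Vmem (diag_support N).
  rewrite /trmul big1 // => i _; rewrite big1 // => j _.
  by rewrite (psd_diag_support0 psdN supp0) mulr0.
rewrite (trmul_schur M p psdN); apply: addr_ge0.
  apply: IHn (psd_schur p psdN).
  apply: leq_ltn_trans (subset_leq_card (diag_support_schur p psdN)) _.
  by move: supp_lt; rewrite (cardsD1 p) p_supp add1n ltnS.
by apply: divr_ge0; [exact: psdM | exact: psd_diag_ge0].
Qed.

Lemma psd_sum (O : finType) (P : pred O) (M : O -> op C T) :
  (forall o, P o -> psd (M o)) -> psd (fun i j => \sum_(o | P o) M o i j).
Proof.
move=> psdM v; rewrite -/(qform _ _ _).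
have -> : qform (fun i j => \sum_(o | P o) M o i j) v v = \sum_(o | P o) qform (M o) v v.
  rewrite /qform [RHS]exchange_big; apply: eq_bigr => i _ /=.
  rewrite [RHS]exchange_big; apply: eq_bigr => j _ /=.
  by rewrite mulr_sumr mulr_suml.
by apply: sumr_ge0 => o Po; apply: psdM.
Qed.

Lemma trmul_suml (O : finType) (P : pred O) (M : O -> op C T) N :
  trmul (fun i j => \sum_(o | P o) M o i j) N = \sum_(o | P o) trmul (M o) N.
Proof.
rewrite /trmul [RHS]exchange_big; apply: eq_bigr => i _ /=.
by rewrite [RHS]exchange_big; apply: eq_bigr => j _ /=; rewrite mulr_suml.
Qed.

Lemma sum_trmul_povm (O : finType) (M : O -> op C T) N :
  povm M -> \sum_o trmul (M o) N = \sum_i N i i.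
Proof.
move=> [_ M_sum1]; rewrite /trmul exchange_big; apply: eq_bigr => i _ /=.
rewrite exchange_big -[RHS](sum_delta (N^~ i)); apply: eq_bigr => j _ /=.
by rewrite -mulr_suml M_sum1 eq_sym.
Qed.

End PositiveSemidefinite.

Section BigSwap.
Variable (R : nmodType).

Lemma exchange_big3 (I J K : finType) (F : I -> J -> K -> R) :
  \sum_i \sum_j \sum_k F i j k = \sum_j \sum_k \sum_i F i j k.
Proof. by rewrite exchange_big; apply: eq_bigr => j _; rewrite exchange_big. Qed.

Lemma exchange_big4 (I J K K' : finType) (F : I -> J -> K -> K' -> R) :
  \sum_i \sum_j \sum_k \sum_l F i j k l = \sum_k \sum_l \sum_i \sum_j F i j k l.
Proof.
rewrite exchange_big3 exchange_big; apply: eq_bigr => k _.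
by rewrite (exchange_big3 (fun j i l => F i j k l)) exchange_big.
Qed.

End BigSwap.

Section PartialTrace.
Variables (C : numClosedFieldType) (L : nat) (d : 'I_L -> nat) (A : {set 'I_L}).
Implicit Types (x y : full_basis d) (rho : op C (full_basis d)).

Lemma agree_outsideE x y :
  [forall l, (l \notin A) ==> (x l == y l)] = (restr (~: A) x == restr (~: A) y).
Proof.
apply/forallP/eqP => [xy_out | /ffunP xy_out l].
  apply/ffunP => l; rewrite !ffunE.
  by have := valP l; rewrite inE => /(implyP (xy_out (val l)))/eqP.
apply/implyP => lA; have lA' : l \in ~: A by rewrite inE.
by have := xy_out (exist _ l lA'); rewrite !ffunE /= => ->.
Qed.

Lemma restr_setC_eq x y :
  (restr A x == restr A y) && (restr (~: A) x == restr (~: A) y) = (x == y).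
Proof.
apply/andP/eqP => [[/eqP/ffunP xyA /eqP/ffunP xyAc] | ->]; last by [].
apply/ffunP => l; have [lA | lA] := boolP (l \in A).
  by have := xyA (exist _ l lA); rewrite !ffunE.
have lA' : l \in ~: A by rewrite inE.
by have := xyAc (exist _ l lA'); rewrite !ffunE.
Qed.

Lemma ptraceE rho a b : ptrace A rho a b =
  \sum_x \sum_y (a == restr A x)%:R * ((b == restr A y)%:R *
    ((restr (~: A) x == restr (~: A) y)%:R * rho x y)).
Proof.
apply: eq_bigr => x _; rewrite big_mkcond; apply: eq_bigr => y _.
rewrite agree_outsideE [a == _]eq_sym [b == _]eq_sym.
by do 3 case: (_ == _); rewrite /= ?mul1r ?mul0r.
Qed.

Lemma ptrace_trace rho : \sum_a ptrace A rho a a = \sum_x rho x x.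
Proof.
under eq_bigr do rewrite ptraceE.
rewrite exchange_big3; apply: eq_bigr => x _.
under eq_bigr do rewrite sum_delta.
rewrite -[RHS](sum_delta (rho x) x); apply: eq_bigr => y _.
by rewrite mulrA -natrM mulnb restr_setC_eq eq_sym.
Qed.

Lemma qform_ptrace rho v : qform (ptrace A rho) v v =
  \sum_x \sum_y (restr (~: A) x == restr (~: A) y)%:R *
    ((v (restr A x))^* * rho x y * v (restr A y)).
Proof.
transitivity (\sum_a \sum_b \sum_x \sum_y (a == restr A x)%:R * ((b == restr A y)%:R *
    ((restr (~: A) x == restr (~: A) y)%:R * ((v a)^* * rho x y * v b)))).
  apply: eq_bigr => a _; apply: eq_bigr => b _; rewrite ptraceE mulr_sumr mulr_suml.
  by apply: eq_bigr => x _; rewrite mulr_sumr mulr_suml; apply: eq_bigr => y _; ring.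
rewrite exchange_big4; apply: eq_bigr => x _; apply: eq_bigr => y _.
by under eq_bigr do rewrite -mulr_sumr sum_delta; rewrite sum_delta.
Qed.

(* [rho_A] is a sum of compressions of [rho], one for each basis state of the
   traced-out part. *)
Lemma ptrace_psd rho : psd rho -> psd (ptrace A rho).
Proof.
move=> psd_rho v; rewrite -/(qform _ _ _) qform_ptrace.
pose w (z : sub_basis d (~: A)) x := (z == restr (~: A) x)%:R * v (restr A x).
have -> : \sum_x \sum_y (restr (~: A) x == restr (~: A) y)%:R *
    ((v (restr A x))^* * rho x y * v (restr A y)) = \sum_z qform rho (w z) (w z).
  rewrite /qform [RHS]exchange_big3; apply: eq_bigr => x _; apply: eq_bigr => y _.
  transitivity (\sum_z (z == restr (~: A) x)%:R * ((z == restr (~: A) y)%:R *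
      ((v (restr A x))^* * rho x y * v (restr A y)))); first by rewrite sum_delta.
  by apply: eq_bigr => z _; rewrite /w rmorphM /= rmorph_nat; ring.
by apply: sumr_ge0 => z _; apply: psd_rho.
Qed.

End PartialTrace.

Lemma exists_injection (A B : finType) : (#|A| <= #|B|)%N -> exists f : A -> B, injective f.
Proof.
move=> le_AB; exists (fun a => enum_val (widen_ord le_AB (enum_rank a))).
by move=> a a' /enum_val_inj/(congr1 val)/= /ord_inj/enum_rank_inj.
Qed.

Section CosetCode.
Variables (F : finFieldType) (m k : nat) (g : {linear 'rV[F]_m -> 'rV[F]_k}).

Lemma dim_lker_limg : (\dim (lker (linfun g)) + \dim (limg (linfun g)) = m)%N.
Proof. by have := limg_ker_dim (linfun g) fullv; rewrite capfv dimvf dim_matrix => ->; lia. Qed.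

Lemma dim_limg_le : (\dim (limg (linfun g)) <= k)%N.
Proof. by have := dimvS (subvf (limg (linfun g))); rewrite dimvf dim_matrix; lia. Qed.

(* A word [c] is injected into a pair (point of the image of [g], residual index
   in ['I_q]) with [q = |F|^(k - rank g)]; the residual index and the secret
   together injectively select a kernel element, which shifts a preimage of the
   image point. *)
Lemma coset_code (S : finType) : (#|S| * #|'rV[F]_k| = #|'rV[F]_m|)%N ->
  exists (Enc : 'rV[F]_k -> S -> 'rV[F]_m) (syndrome : 'rV[F]_k -> 'rV[F]_k),
    (forall c s, g (Enc c s) = syndrome c) /\
    bijective (fun cs : 'rV[F]_k * S => Enc cs.1 cs.2).
Proof.
move=> card_S; set f := linfun g; set r := \dim (limg f).
pose q := (#|F| ^ (k - r))%N.
have F_gt0 : (0 < #|F|)%N by apply/card_gt0P; exists 0.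
have [split_c split_c_inj] :
    exists split_c : 'rV[F]_k -> {y | y \in limg f} * 'I_q, injective split_c.
  apply: exists_injection.
  by rewrite card_prod card_sig card_vspace card_ord card_mx mul1n -expnD subnKC ?dim_limg_le.
have card_qS : (q * #|S| = #|F| ^ \dim (lker f))%N.
  apply/eqP; rewrite -(@eqn_pmul2r #|'rV[F]_k|); last by apply/card_gt0P; exists 0.
  rewrite -mulnA card_S !card_mx -!expnD; apply/eqP; congr (_ ^ _)%N.
  by have := dim_lker_limg; have := dim_limg_le; rewrite -/f -/r; lia.
have [kern kern_inj] : exists kern : 'I_q * S -> {x | x \in lker f}, injective kern.
  by apply: exists_injection; rewrite card_prod card_sig card_vspace card_ord card_qS.
pose pre y := odflt 0 [pick x | g x == y].
have preP y : y \in limg f -> g (pre y) = y.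
  case/memv_imgP => x _ ->; rewrite /pre; case: pickP => [x' /eqP -> | /(_ x)].
    by rewrite lfunE.
  by rewrite lfunE eqxx.
have g_kern p : g (val (kern p)) = 0.
  by have := valP (kern p); rewrite memv_ker lfunE => /eqP.
pose Enc c s := pre (val (split_c c).1) + val (kern ((split_c c).2, s)).
have g_Enc c s : g (Enc c s) = val (split_c c).1.
  by rewrite linearD g_kern addr0 preP // (valP (split_c c).1).
exists Enc, (fun c => val (split_c c).1); split=> //.
apply: inj_card_bij; last by rewrite card_prod mulnC card_S.
move=> -[c s] [c' s'] /= Enc_eq.
have /val_inj syn_eq : val (split_c c).1 = val (split_c c').1 by rewrite -(g_Enc c s) Enc_eq g_Enc.
move: Enc_eq; rewrite /Enc syn_eq => /addrI/val_inj/kern_inj [res_eq ->].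
by congr (_, _); apply: split_c_inj; apply: injective_projections.
Qed.

End CosetCode.

Section CoarseGraining.
Variables (C : numClosedFieldType) (T O O' : finType).
Variables (phi : O -> O') (M : O -> op C T).

Definition povm_image (o' : O') : op C T := fun i j => \sum_(o | phi o == o') M o i j.

Lemma povm_image_povm : povm M -> povm povm_image.
Proof.
move=> [M_psd M_sum1]; split=> [o'|i j]; first by apply: psd_sum => o _.
by rewrite -M_sum1 (partition_big phi xpredT).
Qed.

Lemma povm_error_le_trace (N : op C T) o0 : povm M -> psd N ->
  \sum_(o | o != o0) trmul (M o) N <= \sum_i N i i.
Proof.
move=> povmM psdN; rewrite -(sum_trmul_povm N povmM) [X in _ <= X](bigD1 o0) //=.
by rewrite lerDr trmul_psd_ge0 //; apply: povmM.1.
Qed.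

Lemma povm_image_error (N : op C T) o0 o0' : povm M -> psd N -> phi o0 = o0' ->
  \sum_(o' | o' != o0') trmul (povm_image o') N <= \sum_(o | o != o0) trmul (M o) N.
Proof.
move=> [M_psd _] psdN <-; under eq_bigr do rewrite trmul_suml.
have -> : \sum_(o' | o' != phi o0) \sum_(o | phi o == o') trmul (M o) N =
          \sum_(o | phi o != phi o0) trmul (M o) N.
  rewrite [RHS](partition_big phi (fun o' => o' != phi o0)) //=.
  apply: eq_bigr => o' o'_ne; apply: eq_bigl => o.
  by case: eqVneq => [->|_]; rewrite ?o'_ne ?andbF.
rewrite big_mkcond [X in _ <= X]big_mkcond; apply: ler_sum => o _.
have [->|_] := eqVneq o o0; first by rewrite eqxx.
by case: ifP => _ //; apply: trmul_psd_ge0.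
Qed.

End CoarseGraining.

Lemma sum_uniform_pairs (K : fieldType) (X Y Z : finType) (f : X -> Y -> Z) (e : Z -> K) :
  bijective (fun xy : X * Y => f xy.1 xy.2) ->
  \sum_x (#|X|%:R)^-1 * \sum_y (#|Y|%:R)^-1 * e (f x y) = (#|Z|%:R)^-1 * \sum_z e z.
Proof.
move=> f_bij; have card_Z : #|Z| = (#|X| * #|Y|)%N by rewrite -card_prod (bij_eq_card f_bij).
transitivity (\sum_x (#|X|%:R)^-1 * ((#|Y|%:R)^-1 * \sum_y e (f x y))).
  by apply: eq_bigr => x _; rewrite -mulr_sumr.
rewrite -mulr_sumr -mulr_sumr mulrA -invfM -natrM -card_Z pair_big /=.
by congr (_ * _); rewrite [RHS](reindex (fun xy : X * Y => f xy.1 xy.2)) //; apply: onW_bij.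
Qed.

Lemma uniform_mean_le (C : numClosedFieldType) (U : finType) (P e : U -> C) (eps : C) :
  (forall u, 0 <= P u) -> (forall u, 0 <= e u <= 1) -> vdist P (@uniform C U) <= eps ->
  (#|U|%:R)^-1 * \sum_u e u <= eps + \sum_u P u * e u.
Proof.
move=> P_ge0 e_bounds close.
have -> : (#|U|%:R)^-1 * \sum_u e u = \sum_u ((#|U|%:R)^-1 - P u) * e u + \sum_u P u * e u.
  by rewrite mulr_sumr -big_split; apply: eq_bigr => u _ /=; ring.
rewrite lerD2r; apply: le_trans close; apply: ler_sum => u _.
have /andP[e_ge0 e_le1] := e_bounds u.
have diff_real : (#|U|%:R)^-1 - P u \is Num.real by rewrite rpredB ?ger0_real ?invr_ge0 ?ler0n.
apply: le_trans (real_ler_norm (rpredM diff_real (ger0_real e_ge0))) _.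
rewrite normrM (ger0_norm e_ge0) distrC /uniform.
by rewrite -[X in _ <= X]mulr1 ler_wpM2l.
Qed.

Theorem lemma3 (F : finFieldType) (m k : nat) (C : numClosedFieldType)
  (L : nat) (d : 'I_L -> nat)
  (rho : 'rV[F]_m -> op C (full_basis d))
  (Hrho : forall u, density (rho u))
  (AA : {set {set 'I_L}})
  (eps1 eps2 : C)
  (Pt : 'rV[F]_m -> C) (HPt : is_distr Pt)
  (Hclose : vdist Pt (@uniform C 'rV[F]_m) <= eps1)
  (g : {linear 'rV[F]_m -> 'rV[F]_k})
  (h : forall A : {set 'I_L}, 'rV[F]_k -> 'rV[F]_m -> op C (sub_basis d A))
  (Hh : forall A, A \in AA -> forall c, povm (h A c))
  (Herr : forall A, A \in AA ->
     \sum_(u : 'rV[F]_m) Pt u *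
        (\sum_(u' : 'rV[F]_m | u' != u) trmul (h A (g u) u') (ptrace A (rho u)))
     <= eps2)
  (S : finType) (HS : (#|S| * #|'rV[F]_k| = #|'rV[F]_m|)%N) :
  exists (Enc : 'rV[F]_k -> S -> 'rV[F]_m)
         (Dec : forall A : {set 'I_L}, 'rV[F]_k -> S -> op C (sub_basis d A)),
    (forall A, A \in AA -> forall c, povm (Dec A c)) /\
    (forall A, A \in AA ->
       \sum_(c : 'rV[F]_k) (#|'rV[F]_k|%:R)^-1 *
         (\sum_(s : S) (#|S|%:R)^-1 *
            \sum_(s' : S | s' != s) trmul (Dec A c s') (ptrace A (rho (Enc c s))))
       <= eps1 + eps2).
Proof.
have [Enc [syndrome [g_Enc Enc_bij]]] := coset_code g HS.
have [unEnc EncK _] := Enc_bij.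
pose Dec A c := povm_image (fun u => (unEnc u).2) (h A (syndrome c)).
exists Enc, Dec; split=> [A A_AA c | A A_AA]; first exact/povm_image_povm/Hh.
pose err u := \sum_(u' | u' != u) trmul (h A (g u) u') (ptrace A (rho u)).
have psd_rhoA u : psd (ptrace A (rho u)) by apply/ptrace_psd/(Hrho u).1.
have err_bounds u : 0 <= err u <= 1.
  apply/andP; split.
    by apply: sumr_ge0 => u' _; exact: trmul_psd_ge0 ((Hh A A_AA _).1 _) (psd_rhoA u).
  rewrite -(Hrho u).2 -(ptrace_trace A).
  exact: povm_error_le_trace (Hh A A_AA _) (psd_rhoA u).
apply: le_trans (_ : \sum_c (#|'rV_k|%:R)^-1 * \sum_s (#|S|%:R)^-1 * err (Enc c s) <= _).
  apply: ler_sum => c _; apply: ler_wpM2l; first by rewrite invr_ge0 ler0n.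
  apply: ler_sum => s _; apply: ler_wpM2l; first by rewrite invr_ge0 ler0n.
  rewrite /err g_Enc.
  exact: povm_image_error (Hh A A_AA _) (psd_rhoA _) (congr1 snd (EncK (c, s))).
rewrite (sum_uniform_pairs err Enc_bij).
apply: le_trans (uniform_mean_le HPt.1 err_bounds Hclose) _.
by rewrite lerD2l Herr.
Qed.
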